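(* Let $X$ be a Tychonoff space containing clopen subsets $U_n$, $n\in\omega$, such that $U_{n+1}\subset U_n$ for all $n\in\omega$ and $C=\bigcap_{n\in\omega}U_n$ is nonempty and not open. Then there exists a nondiscrete countable Tychonoff space $Y$ such that $F_G(Y)$, $A_G(Y)$, and $B_G(Y)$ are topological quotient groups of $F_G(X)$, $A_G(X)$, and $B_G(X)$, respectively.
   Context: For a Tychonoff space $X$ with a fixed point $x_0$, the Graev free topological group $F_G(X)$ is the unique topological group with identity $x_0$ containing $X$ as a subspace such that every continuous map from $X$ to a topological group $G$ sending $x_0$ to the identity extends to a continuous homomorphism $F_G(X)\to G$ (it does not depend on the choice of $x_0$ up to topological isomorphism). The Graev free Abelian topological group $A_G(X)$ and free Boolean topological group $B_G(X)$ are defined analogously, with the group being Abelian (resp. Boolean, i.e., all elements of order at most $2$) and only maps into Abelian (resp. Boolean) topological groups required to extend. A topological group $H$ is a topological quotient of $G$ if $H$ is topologically isomorphic to $G/N$ with the quotient topology for some closed normal subgroup $N$. *)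

From HB Require Import structures.
From mathcomp Require Import all_boot monoid.
From mathcomp Require Import all_classical all_reals topology.
From mathcomp Require Import Rstruct Rstruct_topology.

Set Implicit Arguments.
Unset Strict Implicit.
Unset Printing Implicit Defensive.

Local Open Scope classical_set_scope.

#[short(type="topGroupType")]
HB.structure Definition TopGroup := {G of Group G & Topological G}.

Definition tychonoff_space (T : topologicalType) : Prop :=
  (forall x y : T, x <> y -> exists U : set T, open U /\ U x /\ ~ U y) /\
  (forall (a : T) (B : set T), closed B -> ~ B a ->
     exists f : T -> Rdefinitions.R, continuous f /\ f a = Rdefinitions.R0 /\
       (forall b, B b -> f b = Rdefinitions.R1)).

Definition discrete_top (T : topologicalType) : Prop :=
  forall x : T, open [set x].

Definition top_embedding (X : topologicalType) (G : topologicalType)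
    (e : X -> G) : Prop :=
  continuous e /\ injective e /\
  (forall U : set X, open U -> exists V : set G, open V /\ U = e @^-1` V).

Local Open Scope group_scope.

Definition topological_group (G : topGroupType) : Prop :=
  continuous (fun p : G * G => p.1 * p.2) /\ continuous (fun x : G => x^-1).

Definition abelian_group (G : topGroupType) : Prop :=
  forall x y : G, x * y = y * x.

Definition boolean_group (G : topGroupType) : Prop :=
  forall x : G, x * x = 1.

Definition any_group (G : topGroupType) : Prop := True.

Definition group_hom (G H : topGroupType) (h : G -> H) : Prop :=
  forall x y : G, h (x * y) = h x * h y.

Definition generates (X : Type) (G : topGroupType) (e : X -> G) : Prop :=
  forall S : set G, S 1 -> (forall x y, S x -> S y -> S (x * y)) ->
    (forall x, S x -> S x^-1) -> range e `<=` S -> S = setT.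

Definition graev_free (P : topGroupType -> Prop) (X : topologicalType) (x0 : X)
    (F : topGroupType) (e : X -> F) : Prop :=
  [/\ topological_group F, P F, top_embedding e, e x0 = 1 &
    generates e] /\
    forall (G : topGroupType), topological_group G -> P G ->
    forall f : X -> G, continuous f -> f x0 = 1 ->
    exists h : F -> G, [/\ group_hom h, continuous h & forall x, h (e x) = f x].

Definition graev_free_group := graev_free any_group.
Definition graev_free_abelian_group := graev_free abelian_group.
Definition graev_free_boolean_group := graev_free boolean_group.

(** H is a topological quotient of G: H is topologically isomorphic to G/N
    (quotient topology) for a closed normal subgroup N; unfolded as the
    existence of a surjective homomorphism p : G -> H with closed kernel N
    such that H carries the quotient topology induced by p. *)
Definition top_quotient (G H : topGroupType) : Prop :=
  exists p : G -> H, [/\ group_hom p, (forall y : H, exists x : G, p x = y),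
    closed (p @^-1` [set 1]) &
    forall U : set H, open U <-> open (p @^-1` U)].

From HB Require Import structures.
From mathcomp Require Import all_boot monoid.
From mathcomp Require Import all_classical all_reals topology.
From mathcomp Require Import Rstruct Rstruct_topology.

(* For x in X let m(x) be the least n with x not in U_n, and m(x) = oo on
   C = \bigcap_n U_n.  The fibres of m are clopen, so identifying points with
   the same value of m is a quotient map r : X -> Y onto a countable space in
   which every point except oo = r(C) is clopen; oo is not isolated because
   r^-1(oo) = C is not open.
   For each of the three classes, r extends to a continuous surjective
   homomorphism p : F(X) -> F(Y).  Since p is open, the quotient topology of
   F(Y) along p is again a group topology, and Y -> F(Y) stays continuous for
   it, so by freeness it is coarser than the free topology: F(Y) carries the
   quotient topology.  The kernel of p is closed because {1} is closed in F(Y): the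
   retraction of Y collapsing all but the first k isolated points onto oo
   extends to a continuous homomorphism into F(Y) with the discrete topology,
   and every z <> 1 is fixed by it for k large. *)

Set Implicit Arguments.
Unset Strict Implicit.
Unset Printing Implicit Defensive.

Local Open Scope classical_set_scope.
Local Open Scope group_scope.

Section GroupHom.
Variables (G H : topGroupType) (h : G -> H).
Hypothesis hM : group_hom h.

Lemma group_hom1 : h 1 = 1.
Proof. by apply: (mulgI (h 1)); rewrite -hM !mulg1. Qed.

Lemma group_homV x : h x^-1 = (h x)^-1.
Proof. by apply/esym/mulg1_eq; rewrite -hM mulgV group_hom1. Qed.

End GroupHom.

Lemma generates_hom_eq (X : Type) (G H : topGroupType) (e : X -> G)
    (h1 h2 : G -> H) :
  generates e -> group_hom h1 -> group_hom h2 ->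
  (forall x, h1 (e x) = h2 (e x)) -> h1 =1 h2.
Proof.
move=> ge h1M h2M h12 z.
have /seteqP[_ /(_ z I)] // : [set z | h1 z = h2 z] = setT.
apply: ge => /=.
- by rewrite (group_hom1 h1M) (group_hom1 h2M).
- by move=> a b ea eb; rewrite h1M h2M ea eb.
- by move=> a ea; rewrite (group_homV h1M) (group_homV h2M) ea.
- by move=> _ [x _ <-].
Qed.

Lemma generates_hom_surj (X : Type) (G H : topGroupType) (e : X -> H)
    (p : G -> H) :
  generates e -> group_hom p -> range e `<=` range p ->
  forall y, exists x, p x = y.
Proof.
move=> ge pM ep y; have /seteqP[_ /(_ y I)[x _ <-]] : range p = setT.
  apply: ge => //.
  - by exists 1 => //; exact: group_hom1.
  - by move=> _ _ [a _ <-] [b _ <-]; exists (a * b) => //; rewrite pM.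
  - by move=> _ [a _ <-]; exists a^-1 => //; rewrite (group_homV pM).
by exists x.
Qed.

HB.instance Definition _ (G : topGroupType) :=
  Group.copy (discrete_topology G) G.

Lemma topological_group_discrete (G : topGroupType) :
  topological_group (discrete_topology G).
Proof.
split=> [[a b]|a].
- apply: (@near_cst_continuous _ _ (a * b) (fun p => p.1 * p.2) (a, b)).
  exists ([set a], [set b]); first by split; exact: discrete_set1.
  by move=> _ [/= -> ->].
- apply: (@near_cst_continuous _ _ a^-1 (fun x => x^-1) a).
  by apply: filterS (discrete_set1 _) => _ ->.
Qed.

Definition quotient_top (X : topologicalType) (Y : choiceType) (r : X -> Y)
  : Type := Y.

HB.instance Definition _ (X : topologicalType) (Y : choiceType) (r : X -> Y) :=
  Choice.copy (quotient_top r) Y.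

Section QuotientTopology.
Variables (X : topologicalType) (Y : choiceType) (r : X -> Y).

Let quotient_open (A : set (quotient_top r)) := open (r @^-1` A).

Lemma quotient_openT : quotient_open setT.
Proof. by rewrite /quotient_open preimage_setT; exact: openT. Qed.

Lemma quotient_openI : setI_closed quotient_open.
Proof.
by move=> A B oA oB; rewrite /quotient_open preimage_setI; exact: openI.
Qed.

Lemma quotient_open_bigcup (I : Type) (A : I -> set (quotient_top r)) :
  (forall i, quotient_open (A i)) -> quotient_open (\bigcup_i A i).
Proof.
move=> oA; rewrite /quotient_open preimage_bigcup.
by apply: bigcup_open => i _; exact: oA.
Qed.

Definition quotient_top_mixin := isOpenTopological.Build (quotient_top r)
  quotient_openT quotient_openI quotient_open_bigcup.

End QuotientTopology.

HB.instance Definition _ (X : topologicalType) (Y : choiceType) (r : X -> Y) :=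
  quotient_top_mixin r.

HB.instance Definition _ (X : topologicalType) (H : topGroupType)
  (r : X -> H) := Group.copy (quotient_top r) H.

Section QuotientTopologyTheory.
Variables (X : topologicalType) (Y : choiceType) (r : X -> Y).

Lemma quotient_top_open (A : set (quotient_top r)) :
  open A <-> open (r @^-1` A).
Proof. by []. Qed.

Lemma quotient_top_closed (A : set (quotient_top r)) :
  closed A <-> closed (r @^-1` A).
Proof. by rewrite -openC quotient_top_open -openC. Qed.

End QuotientTopologyTheory.

Lemma continuous_mulgr (G : topGroupType) : topological_group G ->
  forall k : G, continuous (fun x : G => x * k).
Proof.
move=> [mulG_cont _] k x.
apply: (continuous_comp (f := fun x => (x, k))) (mulG_cont (x, k)).
exact: cvg_pair cvg_id (cvg_cst k).
Qed.

Section TopGroupQuotient.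
Variables (G H : topGroupType) (p : G -> H).
Hypotheses (tG : topological_group G) (pM : group_hom p)
  (p_surj : forall y, exists x, p x = y).

Lemma open_saturation (W : set G) : open W -> open (p @^-1` (p @` W)).
Proof.
rewrite !openE => oW x [w Ww pwx].
pose k := x^-1 * w.
have xk : x * k = w by rewrite /k mulgA mulgV mul1g.
have : nbhs x ((fun y => y * k) @^-1` W).
  by apply: (continuous_mulgr tG); rewrite xk; exact: oW.
apply: filterS => y Wyk; exists (y * k) => //.
by rewrite pM /k pM (group_homV pM) pwx mulVg mulg1.
Qed.

Lemma open_quotient_image (W : set G) :
  open W -> open (p @` W : set (quotient_top p)).
Proof. by move=> oW; apply/quotient_top_open; exact: open_saturation. Qed.

Lemma topological_group_quotient_top : topological_group (quotient_top p).
Proof.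
split; apply/continuousP => A oA.
- rewrite openE => -[a b] /= Aab.
  have [[a' pa] [b' pb]] := (p_surj a, p_surj b).
  have : nbhs (a', b') ((fun q : G * G => q.1 * q.2) @^-1` (p @^-1` A)).
    by apply: tG.1; apply: open_nbhs_nbhs; split => //=; rewrite pM pa pb.
  move=> [[W1 W2] /= [nW1 nW2] W12A].
  move: nW1 nW2; rewrite !nbhsE => -[O1 [oO1 O1a'] O1W1] [O2 [oO2 O2b'] O2W2].
  exists (p @` O1, p @` O2).
    split; apply: open_nbhs_nbhs; split; try exact: open_quotient_image.
    + by rewrite -pa; exists a'.
    + by rewrite -pb; exists b'.
  move=> [_ _] [/= [u Ou <-] [v Ov <-]].
  by rewrite -pM; apply: (W12A (u, v)); split; [exact: O1W1 | exact: O2W2].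
- apply/quotient_top_open.
  have -> : p @^-1` ((fun x : quotient_top p => x^-1) @^-1` A) =
            (fun x : G => x^-1) @^-1` (p @^-1` A).
    by apply/seteqP; split => x /=; rewrite (group_homV pM).
  by move/continuousP : tG.2; apply.
Qed.

End TopGroupQuotient.

Lemma graev_free_top_quotient (P : topGroupType -> Prop)
    (X Y : topologicalType) (r : X -> Y) (x0 : X)
    (FX : topGroupType) (eFX : X -> FX) (FY : topGroupType) (eFY : Y -> FY) :
  (forall A : set Y, open A <-> open (r @^-1` A)) ->
  (forall y, exists x, r x = y) ->
  closed [set 1 : FY] ->
  (forall p : FX -> FY, P FY -> P (quotient_top p)) ->
  graev_free P x0 eFX -> graev_free P (r x0) eFY -> top_quotient FX FY.
Proof.
move=> r_quot r_surj FY_closed1 P_quot.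
move=> [[tFX _ [eFX_cont _] _ _] univX].
move=> [[tFY PFY [eFY_cont _] eFY1 genY] univY].
have r_cont : continuous r by apply/continuousP => A /r_quot.
have [p [pM p_cont peFX]] := univX FY tFY PFY (eFY \o r)
  (fun x => continuous_comp (r_cont x) (eFY_cont (r x))) eFY1.
have p_surj : forall y, exists x, p x = y.
  apply: (generates_hom_surj genY pM) => _ [y _ <-].
  by have [x <-] := r_surj y; exists (eFX x).
exists p; split => //; first exact: preimage_closed (in1W p_cont) FY_closed1.
move=> A; split; first by move/continuousP : p_cont; apply.
move=> oA.
have eFY_contQ : continuous (eFY : Y -> quotient_top p).
  apply/continuousP => B oB; apply/r_quot.
  have -> : r @^-1` (eFY @^-1` B) = eFX @^-1` (p @^-1` B).
    by apply/seteqP; split => x /=; rewrite peFX.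
  by move/continuousP : eFX_cont; apply.
have tQ := topological_group_quotient_top tFX pM p_surj.
have [h [hM h_cont heFY]] :=
  univY (quotient_top p) tQ (P_quot p PFY) _ eFY_contQ eFY1.
have h_id : h =1 id by apply: (generates_hom_eq genY hM).
have -> : A = h @^-1` (A : set (quotient_top p)).
  by apply/seteqP; split => z /=; rewrite h_id.
by move/continuousP : h_cont; apply.
Qed.

Lemma continuous_if_clopen (T S : topologicalType) (A : set T) (u v : S) :
  clopen A -> continuous (fun x => if pselect (A x) then u else v).
Proof.
move=> [oA cA] x; have [Ax|nAx] := pselect (A x).
  apply: (near_cst_continuous u); have : nbhs x A by exact: open_nbhs_nbhs.
  by apply: filterS => y Ay; case: pselect.
apply: (near_cst_continuous v).
have : nbhs x (~` A) by apply: open_nbhs_nbhs; split; rewrite ?openC.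
by apply: filterS => y nAy; case: pselect.
Qed.

Section OnePointSpace.
Variables (Y : topologicalType) (oo : Y).
Hypothesis clopen_set1 : forall y, y <> oo -> clopen [set y].

Lemma open_notin_oo (A : set Y) : ~ A oo -> open A.
Proof.
move=> Aoo; rewrite -[A]image_id -bigcup_imset1; apply: bigcup_open => y Ay.
have yoo : y <> oo by move=> yoo; rewrite -yoo in Aoo.
by have [] := clopen_set1 yoo.
Qed.

Lemma closed_set1_one_point (y : Y) : closed [set y].
Proof.
have [->|yoo] := pselect (y = oo); last by have [] := clopen_set1 yoo.
by rewrite -openC; apply: open_notin_oo => /(_ erefl).
Qed.

Lemma tychonoff_one_point : tychonoff_space Y.
Proof.
split=> [x y xy|a B cB Ba].
  exists (~` [set y]); split.
    by rewrite openC; exact: closed_set1_one_point.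
  by split => // /(_ erefl).
have [A [cA BA Aa]] : exists A, [/\ clopen A, B `<=` A & ~ A a].
  have [aoo|aoo] := pselect (a = oo).
    by subst a; exists B; split => //; split => //; exact: open_notin_oo.
  exists (~` [set a]); split.
  - by have [oa ca] := clopen_set1 aoo; split; rewrite ?openC ?closedC.
  - by move=> b Bb ba; apply: Ba; rewrite -ba.
  - by apply.
exists (fun y => if pselect (A y) then Rdefinitions.R1 else Rdefinitions.R0).
split; first exact: continuous_if_clopen.
by split; [case: pselect | move=> b /BA Ab; case: pselect].
Qed.

Variable E : nat -> set Y.
Hypotheses (E_closed : forall k, closed (E k)) (E_oo : forall k, ~ E k oo)
  (E_mono : forall k l, (k <= l)%N -> E k `<=` E l)
  (E_cover : forall y, y <> oo -> exists k, E k y).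

Definition retraction k y := if pselect (E k y) then y else oo.

Lemma retraction_locally_constant k y :
  \forall z \near y, retraction k z = retraction k y.
Proof.
have [Eky|nEky] := pselect (E k y).
  have yoo : y <> oo by move=> yoo; apply: (E_oo (k := k)); rewrite -yoo.
  have [oy _] := clopen_set1 yoo.
  have : nbhs y [set y] by exact: open_nbhs_nbhs.
  by apply: filterS => _ ->.
have : nbhs y (~` E k).
  by apply: open_nbhs_nbhs; split; [rewrite openC; exact: E_closed|].
by apply: filterS => z nEkz; rewrite /retraction; do 2 case: pselect.
Qed.

Lemma retraction_eventually_id y : \forall k \near \oo, retraction k y = y.
Proof.
have [->|yoo] := pselect (y = oo).
  by apply: nearW => k; rewrite /retraction; case: pselect.
have [k0 Ek0y] := E_cover yoo.
near=> k; rewrite /retraction; case: pselect => // nEky; case: nEky.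
by apply: (E_mono _ Ek0y); near: k; exact: nbhs_infty_ge.
Unshelve. all: by end_near.
Qed.

Lemma graev_free_closed1 (P : topGroupType -> Prop) (y0 : Y)
    (FY : topGroupType) (eFY : Y -> FY) :
  P (discrete_topology FY) -> graev_free P y0 eFY -> closed [set 1 : FY].
Proof.
move=> PD [[_ _ _ eFY1 genY] univY].
pose extends k (h : FY -> discrete_topology FY) :=
  group_hom h /\ forall y, h (eFY y) = eFY (retraction k y).
have fixed_eventually z :
    \forall k \near \oo, forall h, extends k h -> h z = z.
  have /seteqP[_ /(_ z I)] // :
      [set z | \forall k \near \oo, forall h, extends k h -> h z = z] = setT.
  apply: genY => /=.
  - by apply: nearW => k h [hM _]; exact: group_hom1.
  - move=> a b; apply: filterS2 => k ha hb h ext_h.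
    by rewrite ext_h.1 (ha _ ext_h) (hb _ ext_h).
  - move=> a; apply: filterS => k ha h ext_h.
    by rewrite (group_homV ext_h.1) (ha _ ext_h).
  - move=> _ [y _ <-]; apply: filterS (retraction_eventually_id y).
    by move=> k ry h [_ ->]; rewrite ry.
rewrite -openC openE => z z1.
have [k [ry0 hz]] :=
  filter_ex (filterI (retraction_eventually_id y0) (fixed_eventually z)).
have ext_cont : continuous (eFY \o retraction k : Y -> discrete_topology FY).
  move=> y; apply: (@near_cst_continuous Y (discrete_topology FY)
    (eFY (retraction k y))).
  by apply: filterS (retraction_locally_constant k y) => /= ? ->.
have ext_y0 : (eFY \o retraction k) y0 = 1 by rewrite /= ry0.
have [h [hM h_cont heFY]] :=
  univY _ (topological_group_discrete FY) PD _ ext_cont ext_y0.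
have : nbhs z (h @^-1` ~` [set 1]).
  apply: h_cont; apply: open_nbhs_nbhs; split; first exact: discrete_open.
  by rewrite /= (hz h (conj hM heFY)).
by apply: filterS => w hw w1; apply: hw; rewrite /= w1 (group_hom1 hM).
Qed.

End OnePointSpace.

Section FirstExit.
Variables (X : topologicalType) (U : nat -> set X).
Hypothesis U_clopen : forall n, clopen (U n).

Lemma clopen_bigcap_prefix m : clopen (\bigcap_(j in `I_m) U j).
Proof.
elim: m => [|m IHm]; first by rewrite II0 bigcap_set0; exact: clopenT.
by rewrite IIS bigcap_setU bigcap_set1; exact: clopenI.
Qed.

Definition exit_set m : set X := ~` U m `&` \bigcap_(j in `I_m) U j.

Lemma clopen_exit_set m : clopen (exit_set m).
Proof.
apply: clopenI; last exact: clopen_bigcap_prefix.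
by have [oU cU] := U_clopen m; split; rewrite ?openC ?closedC.
Qed.

Definition first_exit (x : X) : option nat :=
  if pselect (exists m, `[< ~ U m x >]) is left ex then Some (ex_minn ex)
  else None.

Lemma first_exit_Some x m : first_exit x = Some m <-> exit_set m x.
Proof.
rewrite /first_exit; case: pselect => [ex|nex]; last first.
  by split=> // -[nUm _]; case: nex; exists m; exact/asboolP.
case: ex_minnP => n /asboolP nUn n_min; split => [[<-]|[nUm Um]].
  split=> // j /= jn; apply: contrapT => nUj.
  by have := n_min j (asboolT nUj); rewrite leqNgt jn.
congr Some; apply/eqP; rewrite eqn_leq n_min ?(asboolT nUm) // leqNgt /=.
by apply/negP => mn; exact: nUn (Um n mn).
Qed.

Lemma first_exit_None x : first_exit x = None <-> (\bigcap_n U n) x.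
Proof.
rewrite /first_exit; case: pselect => [ex|nex]; split => //.
  by move=> allU; have [m /asboolP[]] := ex; exact: allU.
by move=> _ n _; apply: contrapT => nUn; apply: nex; exists n; exact/asboolP.
Qed.

(* Only the attained values, so that [to_exit] is onto. *)
Definition exit_values := {v : option nat | `[< range first_exit v >]}.

Definition to_exit (x : X) : exit_values :=
  exist _ (first_exit x) (asboolT (ex_intro2 _ _ x I erefl)).

Definition exit_space := quotient_top to_exit.

End FirstExit.

Section ExitSpace.
Variables (X : topologicalType) (U : nat -> set X).
Hypothesis U_clopen : forall n, clopen (U n).
Variable c : X.
Hypothesis Cc : (\bigcap_n U n) c.

Local Notation Y := (exit_space U).
Local Notation r := (to_exit U).

Let Y_val_inj : injective (val : Y -> option nat) := val_inj.

Lemma to_exit_surj (y : Y) : exists x, r x = y.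
Proof.
by case: y => v vP; have /asboolP[x _ xv] := vP; exists x; exact: Y_val_inj.
Qed.

Definition exit_oo : exit_values U := r c.

Lemma val_exit_oo : val exit_oo = None.
Proof. exact/first_exit_None. Qed.

Lemma to_exit_oo x : r x = exit_oo <-> (\bigcap_n U n) x.
Proof.
rewrite -first_exit_None -val_exit_oo; split => [/(congr1 val) //|xoo].
exact: val_inj.
Qed.

Lemma preimage_exit_set1 (y : Y) m :
  val y = Some m -> r @^-1` [set y] = exit_set U m.
Proof.
move=> ym; apply/seteqP; split => x /=.
  by move=> xy; apply/first_exit_Some; rewrite -ym -xy.
by move/first_exit_Some => xm; apply: Y_val_inj; rewrite /= xm ym.
Qed.

Lemma exit_space_clopen_set1 (y : Y) : y <> exit_oo -> clopen [set y].
Proof.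
move=> yoo; case ym: (val y) => [m|]; last first.
  by case: yoo; apply: Y_val_inj; rewrite ym val_exit_oo.
have [o cl] := clopen_exit_set U_clopen m.
rewrite -(preimage_exit_set1 ym) in o cl.
by split; [exact/quotient_top_open | exact/quotient_top_closed].
Qed.

Definition exit_before k : set Y :=
  [set y | exists2 m, (m < k)%N & val y = Some m].

Lemma preimage_setC_exit_before k :
  r @^-1` (~` exit_before k) = \bigcap_(j in `I_k) U j.
Proof.
apply/seteqP; split => x /=.
  move=> not_before j jk; apply: contrapT => nUj.
  case xm: (first_exit U x) => [m|]; last first.
    by move/first_exit_None: xm => /(_ j I).
  have [_ Um] := (first_exit_Some U x m).1 xm.
  apply: not_before; exists m => //; rewrite (leq_ltn_trans _ jk) // leqNgt.
  by apply/negP => jm; exact: nUj (Um j jm).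
by move=> Ux [m mk /first_exit_Some[nUm _]]; exact: nUm (Ux m mk).
Qed.

Lemma closed_exit_before k : closed (exit_before k).
Proof.
rewrite -openC; apply/quotient_top_open; rewrite preimage_setC_exit_before.
by have [] := clopen_bigcap_prefix U_clopen k.
Qed.

Lemma exit_before_oo k : ~ exit_before k exit_oo.
Proof. by case=> m _; rewrite val_exit_oo. Qed.

Lemma exit_before_mono k l : (k <= l)%N -> exit_before k `<=` exit_before l.
Proof. by move=> kl y [m mk ym]; exists m => //; exact: leq_trans kl. Qed.

Lemma exit_before_cover (y : Y) : y <> exit_oo -> exists k, exit_before k y.
Proof.
move=> yoo; case ym: (val y) => [m|]; first by exists m.+1, m.
by case: yoo; apply: Y_val_inj; rewrite ym val_exit_oo.
Qed.

Lemma exit_space_tychonoff : tychonoff_space Y.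
Proof. exact: tychonoff_one_point exit_space_clopen_set1. Qed.

Lemma exit_space_countable : countable [set: Y].
Proof. exact: (countableP (T := exit_values U)). Qed.

Lemma exit_space_nondiscrete : ~ open (\bigcap_n U n) -> ~ discrete_top Y.
Proof.
move=> C_not_open Y_discrete; apply: C_not_open.
have -> : \bigcap_n U n = r @^-1` [set exit_oo].
  by apply/seteqP; split => x /to_exit_oo.
exact/quotient_top_open/Y_discrete.
Qed.

Lemma top_quotient_exit_space (P : topGroupType -> Prop) :
  (forall G : topGroupType, P G -> P (discrete_topology G)) ->
  (forall (G : topGroupType) (Z : topologicalType) (p : Z -> G),
     P G -> P (quotient_top p)) ->
  forall (x0 : X) (FX : topGroupType) (eFX : X -> FX)
    (FY : topGroupType) (eFY : Y -> FY),
  graev_free P x0 eFX -> graev_free P (r x0 : Y) eFY -> top_quotient FX FY.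
Proof.
move=> P_discrete P_quotient x0 FX eFX FY eFY FX_free FY_free.
have PFY : P FY by case: FY_free => -[].
apply: (graev_free_top_quotient (@quotient_top_open _ _ r) to_exit_surj _ _
  FX_free FY_free); last by move=> p; exact: P_quotient.
exact: (graev_free_closed1 exit_space_clopen_set1 closed_exit_before
  exit_before_oo exit_before_mono exit_before_cover (P_discrete _ PFY) FY_free).
Qed.

End ExitSpace.

Theorem proposition1 (X : topologicalType) (U : nat -> set X) :
  tychonoff_space X ->
  (forall n, clopen (U n)) ->
  (forall n, U n.+1 `<=` U n) ->
  \bigcap_n U n !=set0 ->
  ~ open (\bigcap_n U n) ->
  forall (x0 : X)
    (FX : topGroupType) (eFX : X -> FX)
    (AX : topGroupType) (eAX : X -> AX)
    (BX : topGroupType) (eBX : X -> BX),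
  graev_free_group x0 eFX ->
  graev_free_abelian_group x0 eAX ->
  graev_free_boolean_group x0 eBX ->
  exists (Y : topologicalType) (y0 : Y),
    [/\ tychonoff_space Y, countable [set: Y] & ~ discrete_top Y] /\
    [/\
      (forall (FY : topGroupType) (eFY : Y -> FY),
         graev_free_group y0 eFY -> top_quotient FX FY),
      (forall (AY : topGroupType) (eAY : Y -> AY),
         graev_free_abelian_group y0 eAY -> top_quotient AX AY) &
      (forall (BY : topGroupType) (eBY : Y -> BY),
         graev_free_boolean_group y0 eBY -> top_quotient BX BY)].
Proof.
move=> _ U_clopen _ [c Cc] C_not_open x0 FX eFX AX eAX BX eBX.
move=> FX_free AX_free BX_free.
exists (exit_space U), (to_exit U x0 : exit_space U); split.
  split.
  - exact (exit_space_tychonoff U_clopen Cc).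
  - exact: exit_space_countable.
  - exact: exit_space_nondiscrete Cc C_not_open.
split=> GY eGY GY_free.
- exact (top_quotient_exit_space U_clopen Cc (P := any_group)
    (fun _ => id) (fun _ _ _ => id) FX_free GY_free).
- exact (top_quotient_exit_space U_clopen Cc (P := abelian_group)
    (fun _ => id) (fun _ _ _ => id) AX_free GY_free).
- exact (top_quotient_exit_space U_clopen Cc (P := boolean_group)
    (fun _ => id) (fun _ _ _ => id) BX_free GY_free).
Qed.
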